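(* Let $W=\langle w_1,\ldots,w_n\rangle$ be a weave. (a) If $W$ is FF, then $W$ is transitive. (b) If $n$ is even and $W$ is FB, then $\{w_2,\ldots,w_n\}$ is a homogeneous set of $W$. (c) If $n$ is even and $W$ is BF, then $\{w_1,\ldots,w_{n-1}\}$ is a homogeneous set of $W$. (d) If $n$ is even and $W$ is BB, then $\{w_1,w_n\}$ is a homogeneous set of $W$. (e) If $n$ is odd and $W$ is FB, then $\{w_1,\ldots,w_{n-1}\}$ is a homogeneous set of $W$. (f) If $n$ is odd and $W$ is BF, then $W$ is isomorphic to $U_n$. (g) If $n$ is odd and $W$ is BB, then $W$ is isomorphic to $T_n$. Now let $v\notin V(W)$ be a vertex such that $v\to w_i$ for odd $i$ and $w_i\to v$ for even $i$, and let $W+v$ be the resulting tournament on $V(W)\cup\{v\}$. (h) If $n$ is odd and $W$ is FF or FB, then $\{v,w_1,\ldots,w_{n-1}\}$ is a homogeneous set of $W+v$. (i) If $n$ is odd and $W$ is BF or BB, then $\{v,w_n\}$ is a homogeneous set of $W+v$. (j) If $n$ is even and $W$ is FF, then $W+v$ is isomorphic to $W_{n+1}$. (k) If $n$ is even and $W$ is FB or BF, then $W+v$ is isomorphic to $U_{n+1}$. (l) If $n$ is even and $W$ is BB, then $W+v$ is isomorphic to $T_{n+1}$.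
   Context: A tournament is a finite, non-null, loopless directed graph in which for any two distinct vertices $u,v$ there is exactly one edge with both ends in $\{u,v\}$; write $u\to v$ for the edge from $u$ to $v$, and $X\Rightarrow Y$ if $x\to y$ for all $x\in X,y\in Y$. A tournament is transitive if its vertices can be ordered so that all edges go forward. A homogeneous set of $G$ is a set $X\subseteq V(G)$ such that each vertex outside $X$ either has edges to all of $X$ or edges from all of $X$. A weave $\langle w_1,\dots,w_n\rangle$ is a tournament on $w_1,\dots,w_n$ such that: (1) $w_i\to w_j$ whenever $i<j$ and $i,j$ have opposite parity; (2) either (2a) $w_i\to w_j$ for all $i<j$ both odd, or (2b) $w_j\to w_i$ for all $i<j$ both odd; (3) either (3a) $w_i\to w_j$ for all $i<j$ both even, or (3b) $w_j\to w_i$ for all $i<j$ both even. It is FF if (2a),(3a) hold; FB if (2a),(3b); BF if (2b),(3a); BB if (2b),(3b). For $n=2k+1$: $T_n$ is the tournament on $v_1,\dots,v_n$ with $v_i\to v_j$ iff $j\equiv i+1,\dots,i+k\pmod n$; $U_n$ is obtained from $T_n$ by reversing all edges with both ends in $\{v_1,\dots,v_k\}$; $W_n$ is the tournament on $x_1,\dots,x_n$ with $x_i\to x_j$ for $1\le i<j\le n-1$ and $\{x_2,x_4,\dots,x_{n-1}\}\Rightarrow x_n\Rightarrow\{x_1,x_3,\dots,x_{n-2}\}$. *)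

From mathcomp Require Import all_boot.
Set Implicit Arguments. Unset Strict Implicit. Unset Printing Implicit Defensive.

Definition tournament (T : finType) (E : rel T) : Prop :=
  (forall u, ~~ E u u) /\ (forall u v, u != v -> E u v != E v u).

Definition transitive_tour (T : finType) (E : rel T) : Prop :=
  exists rk : T -> nat, injective rk /\ forall u v, E u v -> rk u < rk v.

Definition homogeneous (T : finType) (E : rel T) (X : {set T}) : Prop :=
  forall y, y \notin X ->
    (forall x, x \in X -> E y x) \/ (forall x, x \in X -> E x y).

Definition isomorphic (T1 T2 : finType) (E1 : rel T1) (E2 : rel T2) : Prop :=
  exists f : T1 -> T2, bijective f /\ forall u v, E1 u v = E2 (f u) (f v).

(* Vertex w_{i+1} of a weave on n vertices is represented by i : 'I_n.
   So "w_a with a odd" means odd (i.+1). *)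
Definition weave_base (n : nat) (E : rel 'I_n) : Prop :=
  tournament E /\
  forall i j : 'I_n, i < j -> odd i.+1 != odd j.+1 -> E i j.

Definition odd_fwd n (E : rel 'I_n) : Prop :=
  forall i j : 'I_n, i < j -> odd i.+1 -> odd j.+1 -> E i j.
Definition odd_bwd n (E : rel 'I_n) : Prop :=
  forall i j : 'I_n, i < j -> odd i.+1 -> odd j.+1 -> E j i.
Definition even_fwd n (E : rel 'I_n) : Prop :=
  forall i j : 'I_n, i < j -> ~~ odd i.+1 -> ~~ odd j.+1 -> E i j.
Definition even_bwd n (E : rel 'I_n) : Prop :=
  forall i j : 'I_n, i < j -> ~~ odd i.+1 -> ~~ odd j.+1 -> E j i.

Definition weaveFF n (E : rel 'I_n) := [/\ weave_base E, odd_fwd E & even_fwd E].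
Definition weaveFB n (E : rel 'I_n) := [/\ weave_base E, odd_fwd E & even_bwd E].
Definition weaveBF n (E : rel 'I_n) := [/\ weave_base E, odd_bwd E & even_fwd E].
Definition weaveBB n (E : rel 'I_n) := [/\ weave_base E, odd_bwd E & even_bwd E].

(* T_m (m = 2k+1) on v_1..v_m, v_{i+1} represented by i : 'I_m:
   i -> j iff (j - i) mod m in {1..k}. *)
Definition Trel (m : nat) : rel 'I_m :=
  fun i j => let d := (j + m - i) %% m in (1 <= d) && (d <= m./2).

(* U_m: reverse the edges with both ends in {v_1..v_k}. *)
Definition Urel (m : nat) : rel 'I_m :=
  fun i j => if (i < m./2) && (j < m./2) then Trel j i else Trel i j.

(* W_m on x_1..x_m, x_{i+1} represented by i : 'I_m. *)
Definition Wrel (m : nat) : rel 'I_m :=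
  fun i j =>
    if (i < m.-1) && (j < m.-1) then i < j
    else if j == m.-1 :> nat then (i != m.-1 :> nat) && ~~ odd i.+1
    else (i == m.-1 :> nat) && odd j.+1.

(* W + v : the new vertex v is None; v -> w_a for odd a, w_a -> v for even a. *)
Definition plusv n (E : rel 'I_n) : rel (option 'I_n) :=
  fun a b => match a, b with
  | Some i, Some j => E i j
  | None, Some j => odd j.+1
  | Some i, None => ~~ odd i.+1
  | None, None => false
  end.

From mathcomp Require Import all_boot zify.
Set Implicit Arguments. Unset Strict Implicit. Unset Printing Implicit Defensive.

(* For a < b the edge between w_a and w_b is forced when b - a is odd, and
   otherwise given by the orientation of the parity class of a; so each of the
   four kinds of weave has an explicit closed form (weave_rel), and every
   claim reduces to arithmetic on indices.  BB and BF weaves of odd order are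
   mapped onto T_n and U_n by interleaving the two classes in reverse cyclic
   order.  W + v is again a weave when v fits at an end: appended as w_(n+1)
   if the odd class is backward and n is even, prepended as a new w_1 (which
   swaps the parities of the old vertices) if the even class is backward;
   FF + v is W_(n+1) with v as its last vertex. *)

Ltac case_ifs :=
  repeat match goal with |- context [if ?b then _ else _] => case: (boolP b) => ? end.

Section Tournament.

Variables (T : finType) (E : rel T).
Hypothesis tourE : tournament E.

Lemma tournament_irrefl u : E u u = false.
Proof. by case: tourE => /(_ u) /negbTE. Qed.

Lemma tournament_asym u v : u != v -> E u v = ~~ E v u.
Proof. by case: tourE => _ /[apply]; case: (E u v); case: (E v u). Qed.

End Tournament.

Section Isomorphism.

Variables (T1 T2 T3 : finType) (E1 : rel T1) (E2 : rel T2) (E3 : rel T3).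

Lemma eq2_isomorphic (F1 : rel T1) : E1 =2 F1 -> isomorphic E1 F1.
Proof. by move=> eqE; exists id; split; [exists id | ]. Qed.

Lemma isomorphic_trans : isomorphic E1 E2 -> isomorphic E2 E3 -> isomorphic E1 E3.
Proof.
move=> [f [bij_f fE]] [g [bij_g gE]]; exists (g \o f); split.
  exact: bij_comp.
by move=> u v; rewrite fE gE.
Qed.

End Isomorphism.

(* The weave with orientation flags fo (odd-indexed w's) and fe (even-indexed
   w's), on nat indices: index i stands for w_(i+1), so odd i is an even w. *)
Definition weave_rel (fo fe : bool) : rel nat := fun i j =>
  if i < j then odd (j - i) || (if odd i then fe else fo)
  else if j < i then ~~ odd (i - j) && ~~ (if odd j then fe else fo)
  else false.

Definition weave_tour (fo fe : bool) {n} : rel 'I_n := fun i j => weave_rel fo fe i j.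

Lemma weave_relFF i j : weave_rel true true i j = (i < j).
Proof. by rewrite /weave_rel; case_ifs; lia. Qed.

Section WeaveClosedForm.

Variables (n : nat) (E : rel 'I_n).
Hypothesis baseE : weave_base E.

Lemma class_edge (f : bool) (p : pred 'I_n) :
  (if f then forall i j : 'I_n, i < j -> p i -> p j -> E i j
   else forall i j : 'I_n, i < j -> p i -> p j -> E j i) ->
  forall i j : 'I_n, i < j -> p i -> p j -> E i j = f.
Proof.
case: f => hE i j ij pi pj; first exact: hE.
rewrite (tournament_asym baseE.1) ?hE //.
by apply: contraTneq ij => ->; rewrite ltnn.
Qed.

Lemma weave_tourE (fo fe : bool) :
  (if fo then odd_fwd E else odd_bwd E) ->
  (if fe then even_fwd E else even_bwd E) ->
  E =2 weave_tour fo fe.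
Proof.
move=> hfo hfe.
have edge_fwd (i j : 'I_n) : i < j -> E i j = weave_rel fo fe i j.
  move=> ij; rewrite /weave_rel ij.
  case oi: (odd i); case oj: (odd j).
  - rewrite (class_edge (p := fun k => ~~ odd k.+1) hfe) //=; [lia | by rewrite oi | by rewrite oj].
  - rewrite baseE.2 //= ?oi ?oj //; lia.
  - rewrite baseE.2 //= ?oi ?oj //; lia.
  - rewrite (class_edge (p := fun k => odd k.+1) hfo) //=; [lia | by rewrite oi | by rewrite oj].
move=> i j; rewrite /weave_tour; case: (ltngtP i j) => [ij | ji | /val_inj ->].
- exact: edge_fwd.
- rewrite (tournament_asym baseE.1); last by apply: contraTneq ji => ->; rewrite ltnn.
  by rewrite edge_fwd // /weave_rel ji; case_ifs; lia.
- by rewrite (tournament_irrefl baseE.1) /weave_rel ltnn.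
Qed.

End WeaveClosedForm.

Arguments weave_tourE {n E} baseE fo fe.

Lemma modn_addB a b m : a < m -> b < m ->
  (b + m - a) %% m = if a <= b then b - a else b + m - a.
Proof.
move=> am bm; case: leqP => ab.
  by rewrite -addnBAC // modnDr modn_small //; lia.
by rewrite modn_small //; lia.
Qed.

(* For m = 2k+1 this sends w_(2t+1) to v_(m-t) and w_(2t) to v_(k+1-t). *)
Definition cyclic_label (m i : nat) : nat :=
  if odd i then m./2 - 1 - i./2 else m - 1 - i./2.

Lemma cyclic_label_lt m (i : 'I_m) : cyclic_label m i < m.
Proof. have := ltn_ord i; rewrite /cyclic_label; case: (odd i); lia. Qed.

Lemma cyclic_label_inj m i j : odd m -> i < m -> j < m ->
  cyclic_label m i = cyclic_label m j -> i = j.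
Proof. rewrite /cyclic_label => om im jm; case oi: (odd i); case oj: (odd j); lia. Qed.

Definition cyclic_ord m (i : 'I_m) : 'I_m := Ordinal (cyclic_label_lt i).

Lemma cyclic_ord_bij m : odd m -> bijective (@cyclic_ord m).
Proof.
move=> om; apply: injF_bij => i j /(congr1 val) /= /cyclic_label_inj eq_ij.
exact/val_inj/eq_ij.
Qed.

Lemma weave_tour_isoT m : odd m -> isomorphic (weave_tour false false (n:=m)) (@Trel m).
Proof.
move=> om; exists (@cyclic_ord m); split; first exact: cyclic_ord_bij.
move=> i j; have := ltn_ord i; have := ltn_ord j.
rewrite /Trel /weave_tour /weave_rel /= !modn_addB ?cyclic_label_lt //.
rewrite /cyclic_label; case oi: (odd i); case oj: (odd j); case_ifs; lia.
Qed.

Lemma weave_tour_isoU m : odd m -> isomorphic (weave_tour false true (n:=m)) (@Urel m).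
Proof.
move=> om; exists (@cyclic_ord m); split; first exact: cyclic_ord_bij.
move=> i j; have := ltn_ord i; have := ltn_ord j.
rewrite /Urel /Trel /weave_tour /weave_rel /= !modn_addB ?cyclic_label_lt //.
rewrite /cyclic_label; case oi: (odd i); case oj: (odd j); case_ifs; lia.
Qed.

Lemma plusv_eq2 n (E F : rel 'I_n) : E =2 F -> plusv E =2 plusv F.
Proof. by move=> eqEF [u|] [v|] /=. Qed.

Definition append_vertex n (a : option 'I_n) : 'I_n.+1 :=
  if a is Some i then widen_ord (leqnSn n) i else ord_max.

Definition prepend_vertex n (a : option 'I_n) : 'I_n.+1 :=
  if a is Some i then Ordinal (ltn_ord i : i.+1 < n.+1) else ord0.

Lemma append_vertex_bij n : bijective (@append_vertex n).
Proof.
apply: inj_card_bij; last by rewrite card_option !card_ord.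
case=> [i|] [j|] /(congr1 val) //= eq_ij.
- by congr Some; apply: val_inj.
- by have := ltn_ord i; lia.
- by have := ltn_ord j; lia.
Qed.

Lemma prepend_vertex_bij n : bijective (@prepend_vertex n).
Proof.
apply: inj_card_bij; last by rewrite card_option !card_ord.
by case=> [i|] [j|] /(congr1 val) //= [/val_inj ->].
Qed.

Lemma plusv_append_iso n fe : ~~ odd n ->
  isomorphic (plusv (weave_tour false fe (n:=n))) (weave_tour false fe (n:=n.+1)).
Proof.
move=> en; exists (@append_vertex n); split; first exact: append_vertex_bij.
case=> [u|] [v|]; rewrite /= /weave_tour /weave_rel /=;
  try have := ltn_ord u; try have := ltn_ord v; case_ifs; lia.
Qed.

Lemma plusv_prepend_iso n fo :
  isomorphic (plusv (weave_tour fo false (n:=n))) (weave_tour false fo (n:=n.+1)).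
Proof.
exists (@prepend_vertex n); split; first exact: prepend_vertex_bij.
case=> [u|] [v|]; rewrite /weave_tour /weave_rel /=; case: fo; case_ifs; lia.
Qed.

Lemma plusv_weave_tour_isoW n : ~~ odd n -> isomorphic (plusv (weave_tour true true (n:=n))) (@Wrel n.+1).
Proof.
move=> en; exists (@append_vertex n); split; first exact: append_vertex_bij.
case=> [u|] [v|]; rewrite /= /Wrel /weave_tour ?weave_relFF /=;
  try have := ltn_ord u; try have := ltn_ord v; case_ifs; lia.
Qed.

Section WeaveParts.

Variables (n : nat) (E : rel 'I_n).

Lemma weaveFF_transitive : weaveFF E -> transitive_tour E.
Proof.
case=> baseE hfo hfe; exists val; split; first exact: val_inj.
by move=> u v; rewrite (weave_tourE baseE true true) // /weave_tour weave_relFF.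
Qed.

Lemma weaveFB_homogeneous_tail : weaveFB E -> homogeneous E [set i : 'I_n | 0 < i].
Proof.
move=> [baseE hfo hfe] y; rewrite inE => hy; left => x; rewrite inE => hx.
rewrite (weave_tourE baseE true false) // /weave_tour /weave_rel.
have := ltn_ord x; have := ltn_ord y; case_ifs; lia.
Qed.

Lemma weaveBF_homogeneous_init : ~~ odd n -> weaveBF E -> homogeneous E [set i : 'I_n | i < n.-1].
Proof.
move=> en [baseE hfo hfe] y; rewrite inE => hy; right => x; rewrite inE => hx.
rewrite (weave_tourE baseE false true) // /weave_tour /weave_rel.
have := ltn_ord x; have := ltn_ord y; case_ifs; lia.
Qed.

Lemma weaveBB_homogeneous_ends : ~~ odd n -> weaveBB E ->
  homogeneous E [set i : 'I_n | (i == 0 :> nat) || (i == n.-1 :> nat)].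
Proof.
move=> en [baseE hfo hfe] y; rewrite inE => hy.
have eE := weave_tourE baseE false false hfo hfe.
case oy: (odd y); [right | left] => x; rewrite inE eE /weave_tour /weave_rel => hx;
  have := ltn_ord x; have := ltn_ord y; case_ifs; lia.
Qed.

Lemma weaveFB_homogeneous_init : odd n -> weaveFB E -> homogeneous E [set i : 'I_n | i < n.-1].
Proof.
move=> on [baseE hfo hfe] y; rewrite inE => hy; right => x; rewrite inE => hx.
rewrite (weave_tourE baseE true false) // /weave_tour /weave_rel.
have := ltn_ord x; have := ltn_ord y; case_ifs; lia.
Qed.

Lemma weaveBF_isoU : odd n -> weaveBF E -> isomorphic E (@Urel n).
Proof.
move=> on [baseE hfo hfe]; apply: (isomorphic_trans _ (weave_tour_isoU on)).
apply: eq2_isomorphic; exact: weave_tourE baseE false true hfo hfe.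
Qed.

Lemma weaveBB_isoT : odd n -> weaveBB E -> isomorphic E (@Trel n).
Proof.
move=> on [baseE hfo hfe]; apply: (isomorphic_trans _ (weave_tour_isoT on)).
apply: eq2_isomorphic; exact: weave_tourE baseE false false hfo hfe.
Qed.

Lemma plusv_homogeneous_initF : odd n -> weaveFF E \/ weaveFB E ->
  homogeneous (plusv E) [set a : option 'I_n | if a is Some i then i < n.-1 else true].
Proof.
move=> on weaveE.
have [fe eE] : exists fe, E =2 weave_tour true fe.
  case: weaveE => [[baseE hfo hfe] | [baseE hfo hfe]].
  - by exists true; exact: weave_tourE baseE true true hfo hfe.
  - by exists false; exact: weave_tourE baseE true false hfo hfe.
case=> [y|]; rewrite inE // => hy; right; case=> [x|]; rewrite inE //= => hx.
  rewrite eE /weave_tour /weave_rel; have := ltn_ord x; have := ltn_ord y; case_ifs; lia.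
by have := ltn_ord y; lia.
Qed.

Lemma plusv_homogeneous_lastB : odd n -> weaveBF E \/ weaveBB E ->
  homogeneous (plusv E) [set a : option 'I_n | if a is Some i then i == n.-1 :> nat else true].
Proof.
move=> on weaveE.
have [fe eE] : exists fe, E =2 weave_tour false fe.
  case: weaveE => [[baseE hfo hfe] | [baseE hfo hfe]].
  - by exists true; exact: weave_tourE baseE false true hfo hfe.
  - by exists false; exact: weave_tourE baseE false false hfo hfe.
case=> [y|]; rewrite inE // => hy.
case oy: (odd y); [left | right]; case=> [x|]; rewrite inE //= ?eE /weave_tour /weave_rel => hx;
  have := ltn_ord y; try have := ltn_ord x; case_ifs; lia.
Qed.

Lemma plusv_weaveFF_isoW : ~~ odd n -> weaveFF E -> isomorphic (plusv E) (@Wrel n.+1).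
Proof.
move=> en [baseE hfo hfe]; apply: (isomorphic_trans _ (plusv_weave_tour_isoW en)).
apply/eq2_isomorphic/plusv_eq2; exact: weave_tourE baseE true true hfo hfe.
Qed.

Lemma plusv_weaveFB_isoU : ~~ odd n -> weaveFB E -> isomorphic (plusv E) (@Urel n.+1).
Proof.
move=> en [baseE hfo hfe]; have on1 : odd n.+1 by rewrite /= en.
apply: (isomorphic_trans _ (weave_tour_isoU on1)).
apply: (isomorphic_trans _ (plusv_prepend_iso n true)).
apply/eq2_isomorphic/plusv_eq2; exact: weave_tourE baseE true false hfo hfe.
Qed.

Lemma plusv_weaveBF_isoU : ~~ odd n -> weaveBF E -> isomorphic (plusv E) (@Urel n.+1).
Proof.
move=> en [baseE hfo hfe]; have on1 : odd n.+1 by rewrite /= en.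
apply: (isomorphic_trans _ (weave_tour_isoU on1)).
apply: (isomorphic_trans _ (plusv_append_iso true en)).
apply/eq2_isomorphic/plusv_eq2; exact: weave_tourE baseE false true hfo hfe.
Qed.

Lemma plusv_weaveBB_isoT : ~~ odd n -> weaveBB E -> isomorphic (plusv E) (@Trel n.+1).
Proof.
move=> en [baseE hfo hfe]; have on1 : odd n.+1 by rewrite /= en.
apply: (isomorphic_trans _ (weave_tour_isoT on1)).
apply: (isomorphic_trans _ (plusv_append_iso false en)).
apply/eq2_isomorphic/plusv_eq2; exact: weave_tourE baseE false false hfo hfe.
Qed.

End WeaveParts.

Theorem proposition3p2 (n : nat) (hn : 0 < n) (E : rel 'I_n) :
  (* (a) *)
  (weaveFF E -> transitive_tour E) /\
  (* (b) *)
  (~~ odd n -> weaveFB E -> homogeneous E [set i : 'I_n | 0 < i]) /\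
  (* (c) *)
  (~~ odd n -> weaveBF E -> homogeneous E [set i : 'I_n | i < n.-1]) /\
  (* (d) *)
  (~~ odd n -> weaveBB E ->
     homogeneous E [set i : 'I_n | (i == 0 :> nat) || (i == n.-1 :> nat)]) /\
  (* (e) *)
  (odd n -> weaveFB E -> homogeneous E [set i : 'I_n | i < n.-1]) /\
  (* (f) *)
  (odd n -> weaveBF E -> isomorphic E (@Urel n)) /\
  (* (g) *)
  (odd n -> weaveBB E -> isomorphic E (@Trel n)) /\
  (* (h) *)
  (odd n -> weaveFF E \/ weaveFB E ->
     homogeneous (plusv E)
       [set a : option 'I_n | if a is Some i then i < n.-1 else true]) /\
  (* (i) *)
  (odd n -> weaveBF E \/ weaveBB E ->
     homogeneous (plusv E)
       [set a : option 'I_n | if a is Some i then i == n.-1 :> nat else true]) /\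
  (* (j) *)
  (~~ odd n -> weaveFF E -> isomorphic (plusv E) (@Wrel n.+1)) /\
  (* (k) *)
  (~~ odd n -> weaveFB E \/ weaveBF E -> isomorphic (plusv E) (@Urel n.+1)) /\
  (* (l) *)
  (~~ odd n -> weaveBB E -> isomorphic (plusv E) (@Trel n.+1)).
Proof.
split; first exact: weaveFF_transitive.
split; first by move=> _; exact: weaveFB_homogeneous_tail.
split; first exact: weaveBF_homogeneous_init.
split; first exact: weaveBB_homogeneous_ends.
split; first exact: weaveFB_homogeneous_init.
split; first exact: weaveBF_isoU.
split; first exact: weaveBB_isoT.
split; first exact: plusv_homogeneous_initF.
split; first exact: plusv_homogeneous_lastB.
split; first exact: plusv_weaveFF_isoW.
split; last exact: plusv_weaveBB_isoT.
by move=> en [weaveE | weaveE]; [apply: plusv_weaveFB_isoU | apply: plusv_weaveBF_isoU].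
Qed.
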